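(* Let $n\ge1$ and let $S\subseteq\mathbb{Z}_{2^n}$ with $|S|=2^{n-1}+1$. For every integer $a$ with $1\le a\le n$, $$|C(a+,a,a)|\ge\max\{|S_a|(|S_{a+}|-|L_a|+|S_a|),\;|S_{a+}|(2|S_a|-|L_a|),\;0\}.$$
   Context: Layers: for $1\le i\le n$, $L_i=\{x\in\mathbb{Z}_{2^n}: x\equiv 2^{i-1}\pmod{2^i}\}$, $L_{n+1}=\{0\}$. $S_i=S\cap L_i$ and $S_{i+}=S\cap(L_{i+1}\cup\dots\cup L_{n+1})$. $C(a+,a,a)$ is the set of ordered triples $(x,y,z)$ with $x+y=z$ in $\mathbb{Z}_{2^n}$, $x\in S_{a+}$, $y\in S_a$, $z\in S_a$. *)

(* Z_{2^n} is modelled as 'Z_(2^n) (faithful since n >= 1,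
   so 2^n >= 2). *)
From mathcomp Require Import all_boot all_order all_algebra.
Set Implicit Arguments. Unset Strict Implicit. Unset Printing Implicit Defensive.
Import Order.TTheory GRing.Theory Num.Theory.

(* Layer L_i of Z_{2^n}: for 1 <= i <= n, x = 2^(i-1) (mod 2^i);
   L_{n+1} = {0}. (Only used for 1 <= i <= n+1.) *)
Definition layer (n i : nat) : {set 'Z_(2^n)} :=
  if i == n.+1 then [set 0%R]
  else [set x : 'Z_(2^n) | (val x %% 2 ^ i == 2 ^ i.-1)%N].

Definition Slayer (n : nat) (S : {set 'Z_(2^n)}) (i : nat) : {set 'Z_(2^n)} :=
  S :&: layer n i.

Definition Supper (n : nat) (S : {set 'Z_(2^n)}) (i : nat) : {set 'Z_(2^n)} :=
  S :&: \bigcup_(i.+1 <= j < n.+2) layer n j.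

Definition Caaa (n : nat) (S : {set 'Z_(2^n)}) (a : nat)
  : {set 'Z_(2^n) * 'Z_(2^n) * 'Z_(2^n)} :=
  [set t | [&& (t.1.1 + t.1.2 == t.2)%R, t.1.1 \in Supper S a,
              t.1.2 \in Slayer S a & t.2 \in Slayer S a]].

From mathcomp Require Import all_boot all_order all_algebra.
From mathcomp Require Import zify.
Import Order.TTheory GRing.Theory Num.Theory.
Set Implicit Arguments. Unset Strict Implicit. Unset Printing Implicit Defensive.

(* Every element of S_{a+} is a multiple of 2^a, so adding it to an element
   of L_a stays in L_a.  Hence for fixed y in S_a, the injective map
   x |-> x + y sends S_{a+} into L_a, and at least
   |S_{a+}| + |S_a| - |L_a| of the images fall in S_a; summing over y gives
   the first bound.  Fixing x in S_{a+} and translating S_a instead gives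
   the second. *)

Lemma upper_layers_dvd n a (x : 'Z_(2^n)) :
  x \in \bigcup_(a.+1 <= j < n.+2) layer n j -> (2 ^ a %| x)%N.
Proof.
rewrite big_nat_cond; elim/big_rec: _ => [|j X /andP[/andP[aj jn] _] IHX].
  by rewrite inE.
rewrite inE => /orP[|//]; rewrite /layer; case: eqP => [_|/eqP jNn].
  by rewrite in_set1 => /eqP ->.
rewrite inE => /eqP xj.
have dvd_aj : (2 ^ a %| 2 ^ j)%N by apply: dvdn_exp2l; lia.
by rewrite /dvdn -(modn_dvdm _ dvd_aj) xj -/(dvdn _ _) dvdn_exp2l //; lia.
Qed.

Lemma layer_addl n a (x y : 'Z_(2^n)) : (0 < a <= n)%N ->
  x \in \bigcup_(a.+1 <= j < n.+2) layer n j -> y \in layer n a ->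
  (x + y)%R \in layer n a.
Proof.
move=> /andP[a_gt0 a_le_n] /upper_layers_dvd x_dvd.
rewrite /layer ifN; last by apply/eqP; lia.
rewrite !inE => /eqP ya; apply/eqP.
have expn_gt1 : (1 < 2 ^ n)%N by rewrite -{1}(expn0 2) ltn_exp2l; lia.
have dvd_mod : (2 ^ a %| (Zp_trunc (2 ^ n)).+2)%N.
  by rewrite (Zp_cast expn_gt1) dvdn_exp2l.
by rewrite /= modn_dvdm // -modnDml (eqP x_dvd) add0n ya.
Qed.

Lemma card_mul_le_sumn (I : finType) (A : {pred I}) (F : I -> nat) (b d : nat) :
  {in A, forall i, b <= F i + d}%N -> (#|A|%:Z * (b%:Z - d%:Z) <= (\sum_(i in A) F i)%:Z)%R.
Proof.
move=> bF; rewrite -[X in (_ <= X)%R]natz natr_sum -natz mulr_natl -sumr_const.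
by apply: ler_sum => i /bF; rewrite natz; lia.
Qed.

(* The points of A outside f^-1(B) are mapped injectively into L :\: B. *)
Lemma leq_add_card_preim (T : finType) (f : T -> T) (A B L : {set T}) :
  injective f -> B \subset L -> {in A, forall x, f x \in L} ->
  (#|A| + #|B| <= #|[set x in A | f x \in B]| + #|L|)%N.
Proof.
move=> f_inj sBL fAL.
have -> : [set x in A | f x \in B] = A :&: f @^-1: B by apply/setP => x; rewrite !inE.
rewrite -(cardsID (f @^-1: B) A) -(cardsID B L) (setIidPr sBL).
suff : (#|A :\: f @^-1: B| <= #|L :\: B|)%N by lia.
rewrite -(card_imset _ f_inj); apply/subset_leq_card/subsetP => _ /imsetP[x + ->].
by rewrite !inE => /andP[fxNB xA]; rewrite fxNB fAL.
Qed.

Section AddTriples.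

Variable T : finZmodType.
Implicit Types X Y Z L : {set T}.

Definition add_triples X Y Z : {set T * T * T} :=
  [set t | [&& (t.1.1 + t.1.2 == t.2)%R, t.1.1 \in X, t.1.2 \in Y & t.2 \in Z]].

Lemma card_add_triples_dsum X Y Z :
  #|add_triples X Y Z| = (\sum_(x in X) \sum_(y in Y | (x + y)%R \in Z) 1)%N.
Proof.
pose P := [set p : T * T | [&& p.1 \in X, p.2 \in Y & (p.1 + p.2)%R \in Z]].
have -> : add_triples X Y Z = [set (p, (p.1 + p.2)%R) | p in P].
  apply/setP => [[[x y] z]]; apply/idP/imsetP => [|[[x' y']]].
    by rewrite inE /= => /and4P[/eqP <- xX yY zZ]; exists (x, y); rewrite ?inE /= ?xX ?yY.
  by rewrite inE /= => /and3P[xX yY zZ] [-> -> ->]; rewrite inE /= eqxx xX yY.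
rewrite card_imset; last by move=> p q [].
by rewrite -sum1_card pair_big_dep; apply: eq_bigl => -[x y]; rewrite inE.
Qed.

Lemma card_add_triples_l X Y Z :
  #|add_triples X Y Z| = (\sum_(x in X) #|[set y in Y | (x + y)%R \in Z]|)%N.
Proof. by rewrite card_add_triples_dsum; apply: eq_bigr => x _; rewrite sum1dep_card. Qed.

Lemma card_add_triples_r X Y Z :
  #|add_triples X Y Z| = (\sum_(y in Y) #|[set x in X | (x + y)%R \in Z]|)%N.
Proof.
rewrite card_add_triples_dsum (exchange_big_dep (mem Y)) /=; last by move=> x y _ /andP[].
apply: eq_bigr => y yY; rewrite sum1dep_card; apply: eq_card => x.
by rewrite !inE yY.
Qed.

Lemma card_add_triples_ge_r X Y Z L :
  Z \subset L -> {in X & Y, forall x y, (x + y)%R \in L} ->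
  (#|Y|%:Z * (#|X|%:Z + #|Z|%:Z - #|L|%:Z) <= #|add_triples X Y Z|%:Z)%R.
Proof.
move=> sZL XYL; rewrite card_add_triples_r -PoszD.
apply: card_mul_le_sumn => y yY.
exact: leq_add_card_preim (addIr y) sZL (fun x xX => XYL x y xX yY).
Qed.

Lemma card_add_triples_ge_l X Y Z L :
  Z \subset L -> {in X & Y, forall x y, (x + y)%R \in L} ->
  (#|X|%:Z * (#|Y|%:Z + #|Z|%:Z - #|L|%:Z) <= #|add_triples X Y Z|%:Z)%R.
Proof.
move=> sZL XYL; rewrite card_add_triples_l -PoszD.
apply: card_mul_le_sumn => x xX.
exact: leq_add_card_preim (addrI x) sZL (XYL x ^~ xX).
Qed.

End AddTriples.

Theorem claim4p3 (n : nat) (hn : (1 <= n)%N) (S : {set 'Z_(2^n)})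
  (hS : #|S| = (2 ^ n.-1).+1) (a : nat) (ha1 : (1 <= a)%N) (ha2 : (a <= n)%N) :
  (Num.max (Num.max
     (#|Slayer S a|%:Z * (#|Supper S a|%:Z - #|layer n a|%:Z + #|Slayer S a|%:Z))
     (#|Supper S a|%:Z * (2 * #|Slayer S a|%:Z - #|layer n a|%:Z)))
     0
   <= #|Caaa S a|%:Z)%R.
Proof.
have Slayer_sub : Slayer S a \subset layer n a by apply: subsetIr.
have a_range : (0 < a <= n)%N by rewrite ha1 ha2.
have add_in_layer : {in Supper S a & Slayer S a, forall x y, (x + y)%R \in layer n a}.
  by move=> x y /setIP[_ x_up] /setIP[_ y_a]; exact: layer_addl a_range x_up y_a.
rewrite !ge_max -andbA; apply/and3P; split=> //.
- by apply: le_trans (card_add_triples_ge_r Slayer_sub add_in_layer); rewrite addrAC.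
- by apply: le_trans (card_add_triples_ge_l Slayer_sub add_in_layer); rewrite mulr_natl mulr2n.
Qed.
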